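(* For every black-white pairing $\rho$ of $\mathbf N$, $$\mathrm{sign}_c(\mathbf N)\,\mathrm{sign}_{BW}(\rho)\prod_{\{b,w\}\in\rho}\mathrm{sign}(b,w)=(-1)^{\#\text{crossings of }\rho}.$$
   Context: $\mathbf N=\{1,\dots,2n\}$ is a set of nodes (arranged counterclockwise on a circle), each colored black or white, with $n$ of each color. A pairing is a partition into 2-element blocks; $\{a,c\},\{b,d\}$ cross if $a<b<c<d$. Black-white pairing: each pair has one black and one white node; with black nodes $b_1<\dots<b_n$ and white nodes $w_1<\dots<w_n$, $\mathrm{sign}_{BW}(\rho)$ is the sign of the permutation $\theta$ of $\{1,\dots,n\}$ with $\rho(b_i)=w_{\theta(i)}$. A couple of consecutive nodes of the same color is a pair $(m,m+1)$, $m\in\{1,\dots,2n\}$, indices mod $2n$ (so $(2n,1)$ allowed), with $m,m+1$ of the same color. For black $b$ and white $w$, $a_{b,w}$ is the number of $m$ with $\min(b,w)\le m<m+1\le\max(b,w)$ and $m,m+1$ the same color; $\mathrm{sign}(b,w)=(-1)^{(|b-w|+a_{b,w}-1)/2}$ (the exponent is an integer). Let $(n_1,n_1+1),\dots,(n_{2k},n_{2k}+1)$ be all couples, $n_1<\dots<n_{2k}$; $k$ of them are black couples with first elements $s_1<\dots<s_k$ and $k$ are white couples with first elements $u_1<\dots<u_k$. If node $1$ is black, put $\varphi(u_i)=2i-1$, $\varphi(s_i)=2i$; if node 1 is white, put $\varphi(s_i)=2i-1$, $\varphi(u_i)=2i$. Then $\mathrm{sign}_c(\mathbf N)$ is the sign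 of the permutation $(\varphi(n_1),\dots,\varphi(n_{2k}))$ in one-line notation, and $\mathrm{sign}_c(\mathbf N)=1$ if $k=0$. *)

From HB Require Import structures.
From mathcomp Require Import all_boot all_order all_algebra all_fingroup.
Set Implicit Arguments. Unset Strict Implicit. Unset Printing Implicit Defensive.
Import GRing.Theory Num.Theory.

(* Nodes are the naturals 1..2n; a colouring is col : nat -> bool,
   col x = true meaning "x is black". Only values on 1..2n matter. *)
Definition nodes (n : nat) : seq nat := iota 1 (2 * n).

Definition nsucc (n m : nat) : nat := if m == 2 * n then 1 else m.+1.

Definition blacks (n : nat) (col : nat -> bool) : seq nat :=
  [seq x <- nodes n | col x].
Definition whites (n : nat) (col : nat -> bool) : seq nat :=
  [seq x <- nodes n | ~~ col x].

(* A black-white pairing, given as the involution x |-> partner of x: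
   blocks are {x, rho x}; each block has one black and one white node. *)
Definition is_bw_pairing (n : nat) (col : nat -> bool) (rho : nat -> nat) : Prop :=
  forall x, x \in nodes n ->
    [/\ rho x \in nodes n, rho (rho x) = x & col (rho x) != col x].

(* Sign of a permutation given in one-line notation s (0-based values
   0..size s - 1); 0 if s is not a permutation. *)
Definition seq_sign (s : seq nat) : int :=
  match [pick p : 'S_(size s) | [forall i : 'I_(size s), (p i : nat) == nth 0 s i]] with
  | Some p => (-1) ^+ odd_perm p
  | None => 0
  end.

(* sign_BW: rho(b_i) = w_{theta(i)} *)
Definition bw_theta (n : nat) (col : nat -> bool) (rho : nat -> nat) : seq nat :=
  [seq index (rho (nth 0 (blacks n col) i)) (whites n col) | i <- iota 0 n].
Definition sign_BW (n : nat) (col : nat -> bool) (rho : nat -> nat) : int :=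
  seq_sign (bw_theta n col rho).

Definition a_bw (n : nat) (col : nat -> bool) (b w : nat) : nat :=
  count (fun m => [&& minn b w <= m, m.+1 <= maxn b w & col m == col m.+1])
        (nodes n).
Definition sign_bw (n : nat) (col : nat -> bool) (b w : nat) : int :=
  (-1) ^+ (((maxn b w - minn b w) + a_bw n col b w).-1 %/ 2).

(* couples (m, m+1 mod 2n) of the same colour, identified by first element *)
Definition is_couple (n : nat) (col : nat -> bool) (m : nat) : bool :=
  col m == col (nsucc n m).
Definition couples (n : nat) (col : nat -> bool) : seq nat :=
  [seq m <- nodes n | is_couple n col m].
Definition black_couples (n : nat) (col : nat -> bool) : seq nat :=
  [seq m <- couples n col | col m].
Definition white_couples (n : nat) (col : nat -> bool) : seq nat :=
  [seq m <- couples n col | ~~ col m].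

(* phi, shifted down by one (values 0..2k-1 instead of 1..2k):
   node 1 black: phi(u_i) = 2i-1, phi(s_i) = 2i;
   node 1 white: phi(s_i) = 2i-1, phi(u_i) = 2i  (i 1-based). *)
Definition phi0 (n : nat) (col : nat -> bool) (m : nat) : nat :=
  if col m then (index m (black_couples n col)) * 2 + (col 1)
  else (index m (white_couples n col)) * 2 + (~~ col 1).

Definition sign_c (n : nat) (col : nat -> bool) : int :=
  seq_sign [seq phi0 n col m | m <- couples n col].

Definition crossings (n : nat) (rho : nat -> nat) : nat :=
  \sum_(a <- nodes n) \sum_(b <- nodes n) \sum_(c <- nodes n) \sum_(d <- nodes n)
     [&& a < b, b < c, c < d, rho a == c & rho b == d].

(* Every factor is a power of -1, so the identity is a congruence modulo 2.
   Give node x the level x - 1 + #{same-coloured couples (m, m + 1) with m + 1 <= x}: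
   |b - w| + a_{b,w} is a difference of levels whose parity is fixed by the colours,
   so sign(b,w) only depends on the halved levels of b and w and on whether b < w.
   Over the blocks of rho the halved levels add up to a quantity of the colouring alone,
   and comparing the blocks two at a time shows that the inversions of theta, the
   blocks with b < rho b and the crossings of rho have together the parity of
   #{(y black, w white) : y < w} + C(n, 2). What is left (this count, the halved levels
   and the inversions of phi, which interleaves the black and the white couples) only
   depends on the colouring; its parity has a closed form on every prefix 1..L of the
   nodes, proved by induction on L. *)

From HB Require Import structures.
From mathcomp Require Import all_boot all_order all_algebra all_fingroup.
From mathcomp Require Import zify.
Set Implicit Arguments. Unset Strict Implicit. Unset Printing Implicit Defensive.
Import GRing.Theory Num.Theory.

(** * Counting modulo 2 *)

Lemma bin2D a b : 'C(a + b, 2) = 'C(a, 2) + 'C(b, 2) + a * b.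
Proof.
elim: b => [|b IH]; first by rewrite addn0 muln0 bin0n !addn0.
by rewrite addnS !binS !bin1 IH; lia.
Qed.

Lemma bin2_add_bool a (e : bool) : 'C(a + e, 2) = 'C(a, 2) + e * a.
Proof. by case: e; rewrite ?addn0 // addn1 binS bin1 mul1n addnC. Qed.

Lemma iota_rcons m k : iota m k.+1 = rcons (iota m k) (m + k).
Proof. by rewrite -addn1 iotaD cats1. Qed.

Lemma eq_sum_mod (I : eqType) (r : seq I) (F G : I -> nat) d :
  {in r, forall x, F x = G x %[mod d]} ->
  \sum_(x <- r) F x = \sum_(x <- r) G x %[mod d].
Proof. by move=> FG; rewrite -modn_summ -[RHS]modn_summ (eq_big_seq _ FG). Qed.

Lemma sum_nat_of_bool (I : Type) (r : seq I) (P : pred I) :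
  \sum_(x <- r) (P x : nat) = count P r.
Proof. by elim: r => [|x r IH]; rewrite ?big_nil ?big_cons ?IH. Qed.

Lemma sum_pick (I : eqType) (r : seq I) (P : pred I) y : uniq r -> y \in r ->
  \sum_(x <- r) (P x && (y == x)) = P y.
Proof.
move=> r_uniq yr; rewrite (bigD1_seq y) //= eqxx andbT big1 ?addn0 // => x.
by rewrite eq_sym => /negbTE ->; rewrite andbF.
Qed.

Lemma sum_pairs_mod2 (I : eqType) (r : seq I) (L : I -> I -> nat) : uniq r ->
  {in r &, forall x y, x != y -> L x y + L y x = 1 %[mod 2]} ->
  \sum_(x <- r) \sum_(y <- r) L x y = \sum_(x <- r) L x x + 'C(size r, 2) %[mod 2].
Proof.
elim: r => [|a r IH] /=; first by rewrite !big_nil.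
case/andP=> ar r_uniq Lodd.
have Lodd_r : {in r &, forall x y, x != y -> L x y + L y x = 1 %[mod 2]}.
  by move=> x y xr yr; apply: Lodd; rewrite inE ?xr ?yr orbT.
have cross : \sum_(y <- r) (L a y + L y a) = \sum_(y <- r) 1 %[mod 2].
  apply: eq_sum_mod => y yr; apply: Lodd; rewrite ?inE ?eqxx ?yr ?orbT //.
  by apply: contraNneq ar => ->.
have {}IH := IH r_uniq Lodd_r.
rewrite sum1_size in cross; rewrite big_cons.
have -> : \sum_(x <- r) \sum_(y <- a :: r) L x y =
          \sum_(x <- r) L x a + \sum_(x <- r) \sum_(y <- r) L x y.
  by rewrite -big_split; apply: eq_bigr => x _; rewrite big_cons.
rewrite !big_cons binS bin1; move: cross IH; rewrite big_split /=; lia.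
Qed.

Lemma ltn_pair_mod2 a b c d : a != b -> c != d ->
  ((a < b) && (d < c)) + ((b < a) && (c < d)) = (b < a) + (d < c) %[mod 2].
Proof. by case: (ltngtP a b) => // _ _; case: (ltngtP c d) => // _ _. Qed.

Lemma count_iota_lt (P : pred nat) a k s : a <= s <= a + k ->
  count (fun u => P u && (u < s)) (iota a k) = count P (iota a (s - a)).
Proof.
case/andP=> a_s s_ak; have -> : k = (s - a) + (k - (s - a)) by lia.
rewrite iotaD count_cat (@eq_in_count _ _ P (iota a (s - a))); last first.
  by move=> u; rewrite mem_iota subnKC // => /andP[_ ->]; rewrite andbT.
rewrite (@eq_in_count _ _ pred0 (iota (a + (s - a)) _)) ?count_pred0 ?addn0 // => u.
by rewrite mem_iota subnKC // => /andP[s_u _]; rewrite ltnNge s_u andbF.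
Qed.

Lemma sum_index_uniq (s : seq nat) (F : nat -> nat) : uniq s ->
  \sum_(x <- s) F (index x s) = \sum_(0 <= i < size s) F i.
Proof.
move=> s_uniq; rewrite (big_nth 0) big_nat_cond [RHS]big_nat_cond; apply: eq_bigr => i.
by rewrite andbT => /andP[_ i_lt]; rewrite index_uniq.
Qed.

(** * Inversions and signs of permutations *)

Lemma sorted_nth_ltn (s : seq nat) i j : sorted ltn s -> i < size s -> j < size s ->
  (nth 0 s i < nth 0 s j) = (i < j).
Proof.
move=> s_sorted ilt jlt; have lt_nth := sorted_ltn_nth ltn_trans 0 s_sorted.
case: (ltngtP i j) => [|ji|->]; rewrite ?ltnn //; first exact: lt_nth.
by apply/negbTE; rewrite -leqNgt ltnW // lt_nth.
Qed.

Lemma sorted_index_ltn (s : seq nat) x y : sorted ltn s -> x \in s -> y \in s ->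
  (index x s < index y s) = (x < y).
Proof.
by move=> s_sorted xs ys; rewrite -(sorted_nth_ltn s_sorted) ?index_mem // !nth_index.
Qed.

Lemma inversions_two_classes (s : seq nat) (P : pred nat) (f : nat -> nat) :
  {in [seq x <- s | P x] &, {homo f : x y / x < y}} ->
  {in [seq x <- s | ~~ P x] &, {homo f : x y / x < y}} ->
  {in [seq x <- s | P x] & [seq x <- s | ~~ P x], forall x y, f x != f y} ->
  \sum_(x <- s) \sum_(y <- s) ((x < y) && (f y < f x))
  = \sum_(x <- [seq x <- s | P x]) \sum_(y <- [seq y <- s | ~~ P y]) ((y < x) + (f y < f x))
    %[mod 2].
Proof.
move=> f_homoA f_homoC f_neq.
set A := [seq x <- s | P x]; set C := [seq x <- s | ~~ P x].
pose F x y : nat := (x < y) && (f y < f x).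
have s_AC : perm_eq (A ++ C) s by rewrite perm_filterC.
have split_sum G : \sum_(x <- s) G x = \sum_(x <- A) G x + \sum_(x <- C) G x.
  by rewrite -(perm_big _ s_AC) big_cat.
have no_inv X : {in X &, {homo f : x y / x < y}} -> \sum_(x <- X) \sum_(y <- X) F x y = 0.
  move=> f_homo; rewrite big_seq big1 // => x xX; rewrite big_seq big1 // => y yX.
  by rewrite /F; case: ltnP => //= xy; rewrite ltnNge ltnW ?f_homo.
have -> : \sum_(x <- s) \sum_(y <- s) F x y =
    (\sum_(x <- A) \sum_(y <- A) F x y + \sum_(x <- A) \sum_(y <- C) F x y) +
    (\sum_(x <- C) \sum_(y <- A) F x y + \sum_(x <- C) \sum_(y <- C) F x y).
  by rewrite split_sum -!big_split; congr (_ + _); apply: eq_bigr => x _; exact: split_sum.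
rewrite !no_inv // add0n addn0 [X in _ + X]exchange_big -big_split /=.
apply: eq_sum_mod => x xA; rewrite -big_split; apply: eq_sum_mod => y yC /=.
apply: ltn_pair_mod2; last exact: f_neq.
by apply: contraTneq yC => <-; move: xA; rewrite !mem_filter => /andP[-> _].
Qed.

Section SignInversions.
Local Open Scope ring_scope.

(* Permuting the columns of the Vandermonde matrix of [0, ..., m - 1] by [p]
   multiplies its determinant by the sign of [p], and the product formula reads that
   sign off the signs of the differences [p j - p i]. *)
Lemma sign_odd_perm_inversions m (p : 'S_m) :
  (-1) ^+ p = (-1) ^+ (\sum_(i < m) \sum_(j < m) ((i < j) && (p j < p i)))%N :> int.
Proof.
pose a : 'rV[int]_m := \row_j (nat_of_ord j)%:Z.
pose ap : 'rV[int]_m := \row_j (nat_of_ord (p j))%:Z.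
have Vap : Vandermonde m ap = col_perm p (Vandermonde m a).
  by apply/matrixP => i j; rewrite !mxE.
have detV : \det (Vandermonde m ap) = (-1) ^+ p * \det (Vandermonde m a).
  by rewrite Vap col_permE det_mulmx det_perm odd_permV mulrC.
rewrite !det_Vandermonde in detV.
have Va_gt0 : 0 < \prod_(i < m) \prod_(j < m | (i < j)%N) (a 0 j - a 0 i).
  by apply: prodr_gt0 => i _; apply: prodr_gt0 => j ij; rewrite !mxE subr_gt0 ltz_nat.
have := congr1 (@sgz _) detV; rewrite sgzM (gtr0_sgz Va_gt0) mulr1.
have -> : sgz ((-1) ^+ p : int) = (-1) ^+ p by case: (odd_perm p); rewrite ?sgzN1 ?sgz1.
move=> <-; rewrite (big_morph (@sgz _) (@sgzM _) (sgz1 _)).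
rewrite (big_morph (fun k => (-1) ^+ k : int) (exprD (-1)) (expr0 _)).
apply: eq_bigr => i _; rewrite (big_morph (@sgz _) (@sgzM _) (sgz1 _)).
rewrite (big_morph (fun k => (-1) ^+ k : int) (exprD (-1)) (expr0 _)).
rewrite big_mkcond /=; apply: eq_bigr => j _; case: ifP => //= ij; rewrite !mxE.
case: (ltngtP (p j) (p i)) => [pji|pij|/val_inj/perm_inj eqji].
- by rewrite ltr0_sgz ?subr_lt0 ?ltz_nat.
- by rewrite gtr0_sgz ?subr_gt0 ?ltz_nat.
- by rewrite eqji ltnn in ij.
Qed.

Lemma seq_sign_map_sorted (s : seq nat) (f : nat -> nat) : sorted ltn s ->
  {in s &, injective f} -> {in s, forall x, (f x < size s)%N} ->
  seq_sign (map f s) = (-1) ^+ (\sum_(x <- s) \sum_(y <- s) ((x < y) && (f y < f x)))%N.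
Proof.
move=> s_sorted f_inj f_lt; rewrite /seq_sign; set t := map f s.
have s_uniq : uniq s := sorted_uniq ltn_trans ltnn s_sorted.
have ilt (i : 'I_(size t)) : (i < size s)%N by case: i; rewrite /t size_map.
have nth_t (i : 'I_(size t)) : nth 0 t i = f (nth 0 s i) by rewrite (nth_map 0).
have t_lt (i : 'I_(size t)) : (nth 0 t i < size t)%N.
  by rewrite nth_t (leq_trans (f_lt _ (mem_nth 0 (ilt i)))) // /t size_map.
case: pickP => [p /forallP /= pE | no_perm].
  rewrite sign_odd_perm_inversions.
  have -> : (\sum_(i < size t) \sum_(j < size t) ((i < j) && (p j < p i)) =
             \sum_(i < size t) \sum_(j < size t) ((i < j) && (nth 0 t j < nth 0 t i)))%N.
    by apply: eq_bigr => i _; apply: eq_bigr => j _; rewrite (eqP (pE i)) (eqP (pE j)).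
  rewrite /t size_map (big_nth 0) big_mkord; apply: congr1; apply: eq_bigr => i _.
  rewrite (big_nth 0) big_mkord; apply: eq_bigr => j _.
  by rewrite !(nth_map 0) // sorted_nth_ltn.
pose g (i : 'I_(size t)) := Ordinal (t_lt i).
suff g_inj : injective g.
  by have /forallP[] := negbT (no_perm (perm g_inj)) => i; rewrite permE.
move=> i j /(congr1 val) /=; rewrite !nth_t => /f_inj eq_ij; apply: val_inj.
by apply/eqP; rewrite -(nth_uniq 0 (ilt i) (ilt j) s_uniq) eq_ij ?mem_nth.
Qed.

Lemma seq_sign_nil : seq_sign [::] = 1.
Proof. by rewrite -[[::]]/(map id [::]) seq_sign_map_sorted // big_nil. Qed.

Lemma sign_mod2 a b : (a = b %[mod 2])%N -> (-1) ^+ a = (-1) ^+ b :> int.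
Proof. by move=> ab; rewrite -signr_odd -[RHS]signr_odd -!modn2 ab. Qed.
End SignInversions.

(** * Levels *)

Section Level.
Variables (n : nat) (col : nat -> bool).

Definition same_below (x : nat) : nat :=
  count (fun m => (m.+1 <= x) && (col m == col m.+1)) (nodes n).

(* Walking from node 1 to node x, the level goes up by 1 across a colour change
   and by 2 across a same-coloured couple. *)
Definition level (x : nat) : nat := x.-1 + same_below x.

Lemma same_below_sub lo hi : lo <= hi ->
  same_below hi = same_below lo +
    count (fun m => [&& lo <= m, m.+1 <= hi & col m == col m.+1]) (nodes n).
Proof.
move=> lo_hi; rewrite /same_below; elim: (nodes n) => //= m s ->.
by case: (col m == col m.+1); rewrite ?andbF ?andbT /=; lia.
Qed.

Lemma levelS x : x \in nodes n -> level x.+1 = (level x).+1 + (col x == col x.+1).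
Proof.
move=> x_node; rewrite /level (same_below_sub (leqnSn x)).
rewrite -sum_nat_of_bool (bigD1_seq x) ?iota_uniq //= leqnn ltnSn.
rewrite big1 => [|m /negbTE mx]; last by rewrite ltnS andbA -eqn_leq eq_sym mx.
have : 0 < x by move: x_node; rewrite mem_iota => /andP[].
by rewrite addn0; lia.
Qed.

Lemma odd_level x : x \in nodes n -> odd (level x) = (col x != col 1).
Proof.
elim: x => [|x IH]; first by rewrite mem_iota.
case: x IH => [|x] IH x_node.
  rewrite /level /same_below (@eq_in_count _ _ pred0) ?count_pred0 ?eqxx // => m.
  by rewrite mem_iota /=; lia.
have x_node' : x.+1 \in nodes n by move: x_node; rewrite !mem_iota; lia.
rewrite levelS //= oddD IH //.
by case: (col x.+1); case: (col x.+2); case: (col 1).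
Qed.

Lemma dist_add_a_bw b w : 0 < b -> 0 < w ->
  maxn b w - minn b w + a_bw n col b w = level (maxn b w) - level (minn b w).
Proof.
move=> b_gt0 w_gt0; have min_max : minn b w <= maxn b w by lia.
rewrite /level (same_below_sub min_max) -/(a_bw n col b w); lia.
Qed.

Lemma sign_bw_exponent_mod2 b w : b \in nodes n -> w \in nodes n -> col b -> ~~ col w ->
  (maxn b w - minn b w + a_bw n col b w).-1 %/ 2
    = (level b)./2 + (level w)./2 + (b < w) + col 1 %[mod 2].
Proof.
move=> b_node w_node b_black w_white.
have [b_gt0 w_gt0] : 0 < b /\ 0 < w by move: b_node w_node; rewrite !mem_iota; lia.
have lb : level b %% 2 = ~~ col 1 by rewrite modn2 odd_level // b_black.
have lw : level w %% 2 = col 1 by rewrite modn2 odd_level // (negbTE w_white); case: (col 1).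
have := dist_add_a_bw b_gt0 w_gt0.
case: (ltngtP b w) => [||eq_bw]; last by move: b_black w_white; rewrite eq_bw => ->.
all: by case: (col 1) lb lw => /= lb lw; lia.
Qed.

Lemma prod_sign_bw (s : seq nat) (f : nat -> nat) :
  (\prod_(b <- s) sign_bw n col b (f b) =
   (-1) ^+ (\sum_(b <- s) (maxn b (f b) - minn b (f b) + a_bw n col b (f b)).-1 %/ 2)%N)%R.
Proof. by rewrite (big_morph (fun k => (-1) ^+ k : int)%R (exprD (-1)) (expr0 _)). Qed.
End Level.

(** * The pairing *)

Lemma sorted_nodes n : sorted ltn (nodes n).
Proof. exact: iota_ltn_sorted. Qed.

Lemma sorted_blacks n col : sorted ltn (blacks n col).
Proof. by apply: sorted_filter; [exact: ltn_trans | exact: sorted_nodes]. Qed.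

Lemma sorted_whites n col : sorted ltn (whites n col).
Proof. by apply: sorted_filter; [exact: ltn_trans | exact: sorted_nodes]. Qed.

Lemma mem_blacks n col x : (x \in blacks n col) = (x \in nodes n) && col x.
Proof. by rewrite mem_filter andbC. Qed.

Lemma mem_whites n col x : (x \in whites n col) = (x \in nodes n) && ~~ col x.
Proof. by rewrite mem_filter andbC. Qed.

(* For the blocks [{a, b}] and [{c, d}] of two black nodes [a] and [c]: an inversion
   of theta, a black node before a white one, and the four ways for the two blocks to
   cross with [{a, b}] holding the smallest endpoint. *)
Definition chord_weight a b c d : nat :=
  ((a < c) && (d < b)) + (c < b)
  + [&& a < c, c < b & b < d] + [&& a < d, d < b & b < c]
  + [&& b < c, c < a & a < d] + [&& b < d, d < a & a < c].

Lemma chord_weight_pair a b c d :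
  a != b -> a != c -> a != d -> b != c -> b != d -> c != d ->
  chord_weight a b c d + chord_weight c d a b = 1 %[mod 2].
Proof.
rewrite /chord_weight; case: (ltngtP a b) => // _ _; case: (ltngtP a c) => // _ _;
case: (ltngtP a d) => // _ _; case: (ltngtP b c) => // _ _;
case: (ltngtP b d) => // _ _; case: (ltngtP c d) => // _ _; lia.
Qed.

Section Pairing.
Variables (n : nat) (col : nat -> bool) (rho : nat -> nat).
Hypotheses (balanced : count col (nodes n) = n) (rho_pairing : is_bw_pairing n col rho).

Local Notation N := (nodes n).
Local Notation B := (blacks n col).
Local Notation W := (whites n col).

Lemma rho_node x : x \in N -> rho x \in N. Proof. by case/rho_pairing. Qed.
Lemma rhoK x : x \in N -> rho (rho x) = x. Proof. by case/rho_pairing. Qed.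
Lemma rho_col x : x \in N -> col (rho x) = ~~ col x.
Proof. by case/rho_pairing => _ _; case: (col x); case: (col (rho x)). Qed.

Lemma rho_black x : x \in B -> rho x \in W.
Proof.
by rewrite mem_blacks mem_whites => /andP[x_node x_black]; rewrite rho_node ?rho_col ?x_black.
Qed.

Lemma size_blacks : size B = n. Proof. by rewrite size_filter. Qed.

Lemma size_whites : size W = n.
Proof.
have := count_predC col N; rewrite balanced size_iota size_filter.
by rewrite (eq_count (a2 := predC col)) //; lia.
Qed.

Lemma black_node x : x \in B -> x \in N. Proof. by rewrite mem_blacks => /andP[]. Qed.
Lemma black_col x : x \in B -> col x. Proof. by rewrite mem_blacks => /andP[]. Qed.

Lemma perm_rho_blacks : perm_eq (map rho B) W.
Proof.
have rhoB_uniq : uniq (map rho B).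
  rewrite map_inj_in_uniq ?filter_uniq ?iota_uniq // => x y xB yB eq_rho.
  by rewrite -(rhoK (black_node xB)) eq_rho rhoK // black_node.
have sub_W : {subset map rho B <= W} by move=> _ /mapP[x xB ->]; exact: rho_black.
have size_W : size W <= size (map rho B) by rewrite size_map size_blacks size_whites.
have [_ eq_mem] := uniq_min_size rhoB_uniq sub_W size_W.
by rewrite uniq_perm ?filter_uniq ?iota_uniq.
Qed.

Lemma sum_whites (F : nat -> nat) : \sum_(w <- W) F w = \sum_(b <- B) F (rho b).
Proof. by rewrite -(perm_big _ perm_rho_blacks) big_map. Qed.

Lemma sum_nodes (F : nat -> nat) : \sum_(x <- N) F x = \sum_(b <- B) (F b + F (rho b)).
Proof.
rewrite big_split -sum_whites -big_cat /=; apply: perm_big.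
by rewrite perm_sym perm_filterC.
Qed.

Lemma sign_BW_inversions :
  sign_BW n col rho = ((-1) ^+ (\sum_(x <- B) \sum_(y <- B) ((x < y) && (rho y < rho x))))%R.
Proof.
rewrite /sign_BW.
have -> : bw_theta n col rho = map (fun b => index (rho b) W) B.
  by rewrite /bw_theta -[in RHS](mkseq_nth 0 B) size_blacks /mkseq -map_comp.
rewrite seq_sign_map_sorted ?sorted_blacks //.
- congr (_ ^+ _)%R; apply: eq_big_seq => x xB; apply: eq_big_seq => y yB.
  by rewrite (sorted_index_ltn (sorted_whites n col) (rho_black yB) (rho_black xB)).
- move=> x y xB yB /(index_inj 0 (rho_black xB) (rho_black yB)) eq_rho.
  by rewrite -(rhoK (black_node xB)) eq_rho rhoK // black_node.
- by move=> x /rho_black; rewrite -index_mem size_whites size_blacks.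
Qed.

Lemma sum_sign_bw_exponents_mod2 :
  \sum_(b <- B) (maxn b (rho b) - minn b (rho b) + a_bw n col b (rho b)).-1 %/ 2
    = \sum_(x <- N) (level n col x)./2 + \sum_(b <- B) (b < rho b) + n * col 1 %[mod 2].
Proof.
pose G b := (level n col b)./2 + (level n col (rho b))./2 + (b < rho b) + col 1.
rewrite (eq_sum_mod (G := G)) => [|b bB]; last first.
  have b_node := black_node bB.
  have b_black := black_col bB.
  by rewrite (sign_bw_exponent_mod2 b_node (rho_node b_node) b_black) // rho_col // b_black.
rewrite (sum_nodes (fun x => (level n col x)./2)) !big_split /= big_const_seq.
by rewrite count_predT iter_addn_0 size_blacks mulnC.
Qed.

Lemma crossings_nodes :
  crossings n rho = \sum_(a <- N) \sum_(b <- N) [&& a < b, b < rho a & rho a < rho b].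
Proof.
have N_uniq : uniq N := iota_uniq 1 (2 * n).
rewrite /crossings; apply: eq_big_seq => a a_node; apply: eq_big_seq => b b_node.
rewrite (eq_bigr (fun c => nat_of_bool ([&& a < b, b < c & c < rho b] && (rho a == c)))).
  by rewrite sum_pick ?rho_node.
move=> c _.
rewrite (eq_bigr (fun d => nat_of_bool ([&& a < b, b < c, c < d & rho a == c] && (rho b == d)))).
  by rewrite sum_pick ?rho_node // !andbA.
by move=> d _; rewrite !andbA.
Qed.

Lemma crossings_mod2 :
  \sum_(x <- B) \sum_(y <- B) ((x < y) && (rho y < rho x)) + \sum_(b <- B) (b < rho b)
    + crossings n rho
  = \sum_(w <- W) \sum_(y <- B) (y < w) + 'C(n, 2) %[mod 2].
Proof.
have B_uniq : uniq B := filter_uniq col (iota_uniq 1 (2 * n)).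
pose L x y := chord_weight x (rho x) y (rho y).
have L_pair : {in B &, forall x y, x != y -> L x y + L y x = 1 %[mod 2]}.
  move=> x y xB yB xy; have [x_node y_node] := (black_node xB, black_node yB).
  have ne_col a b : col a != col b -> a != b by apply: contraNneq => ->.
  have [cx cy] : col x /\ col y by rewrite !black_col.
  have [crx cry] : col (rho x) = false /\ col (rho y) = false by rewrite !rho_col ?cx ?cy.
  apply: chord_weight_pair => //; try by apply: ne_col; rewrite ?cx ?cy ?crx ?cry.
  by apply: contra_neq xy => /(congr1 rho); rewrite !rhoK.
have total : \sum_(x <- B) \sum_(y <- B) L x y =
    \sum_(x <- B) \sum_(y <- B) ((x < y) && (rho y < rho x))
    + \sum_(w <- W) \sum_(y <- B) (y < w) + crossings n rho.
  rewrite crossings_nodes sum_whites sum_nodes -!big_split /=.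
  apply: eq_big_seq => x xB; rewrite !sum_nodes -!big_split /=.
  apply: eq_big_seq => y yB; rewrite /L /chord_weight !rhoK ?black_node //; lia.
have diag : \sum_(x <- B) L x x = \sum_(b <- B) (b < rho b).
  by apply: eq_bigr => x _; rewrite /L /chord_weight !ltnn /= !andbF; lia.
have := sum_pairs_mod2 B_uniq L_pair; rewrite total diag size_blacks; lia.
Qed.
End Pairing.

(** * The colouring *)

Section Prefix.
Variable col : nat -> bool.

(* The quantities of the colouring restricted to the nodes 1..L; the double counts
   [couple_inv_upto] (a white couple before a black one) and [bw_inv_upto] (a black
   node before a white one) are summed over the larger element of each pair. *)
Definition blacks_upto L := count col (iota 1 L).
Definition bcouples_upto L := count (fun m => col m && col m.+1) (iota 1 L.-1).
Definition wcouples_upto L := count (fun m => ~~ col m && ~~ col m.+1) (iota 1 L.-1).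
Definition couple_inv_upto L :=
  \sum_(m <- iota 1 L.-1) (col m && col m.+1) * wcouples_upto m.
Definition bw_inv_upto L := \sum_(m <- iota 1 L) ~~ col m * blacks_upto m.-1.
Definition level_half_upto L :=
  \sum_(m <- iota 1 L) (m.-1 + bcouples_upto m + wcouples_upto m)./2.

Lemma blacks_uptoS L : blacks_upto L.+1 = blacks_upto L + col L.+1.
Proof. by rewrite /blacks_upto iota_rcons -cats1 count_cat /= addn0 add1n. Qed.

Lemma bcouples_uptoS L : bcouples_upto L.+2 = bcouples_upto L.+1 + (col L.+1 && col L.+2).
Proof.
by rewrite /bcouples_upto -[L.+2.-1]/L.+1 iota_rcons -cats1 count_cat /= addn0 add1n.
Qed.

Lemma wcouples_uptoS L :
  wcouples_upto L.+2 = wcouples_upto L.+1 + (~~ col L.+1 && ~~ col L.+2).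
Proof.
by rewrite /wcouples_upto -[L.+2.-1]/L.+1 iota_rcons -cats1 count_cat /= addn0 add1n.
Qed.

Lemma couple_inv_uptoS L :
  couple_inv_upto L.+2 = couple_inv_upto L.+1 + (col L.+1 && col L.+2) * wcouples_upto L.+1.
Proof.
by rewrite /couple_inv_upto -[L.+2.-1]/L.+1 iota_rcons -cats1 big_cat big_seq1 add1n.
Qed.

Lemma bw_inv_uptoS L : bw_inv_upto L.+1 = bw_inv_upto L + ~~ col L.+1 * blacks_upto L.
Proof. by rewrite /bw_inv_upto iota_rcons -cats1 big_cat big_seq1 add1n. Qed.

Lemma level_half_uptoS L : level_half_upto L.+1 =
  level_half_upto L + (L + bcouples_upto L.+1 + wcouples_upto L.+1)./2.
Proof. by rewrite /level_half_upto iota_rcons -cats1 big_cat big_seq1 add1n. Qed.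

(* Each black run of length r contains r - 1 black couples, and the numbers of black
   and white runs differ by [col 1 + col L - 1]. *)
Lemma couples_upto_balance L :
  bcouples_upto L.+1 + L.+1 + col 1 + col L.+1
  = wcouples_upto L.+1 + 2 * blacks_upto L.+1 + 1.
Proof.
elim: L => [|L IH].
  by rewrite /bcouples_upto /wcouples_upto /blacks_upto /=; case: (col 1).
rewrite bcouples_uptoS wcouples_uptoS blacks_uptoS; move: IH.
by case: (col L.+1); case: (col L.+2); case: (col 1) => /=; lia.
Qed.

Lemma prefix_parity L :
  couple_inv_upto L.+1 + bw_inv_upto L.+1 + level_half_upto L.+1
  = 'C(L.+1 + bcouples_upto L.+1, 2) + 'C((blacks_upto L.+1).+1, 2)
    + col 1 * (bcouples_upto L.+1 + blacks_upto L.+1) %[mod 2].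
Proof.
elim: L => [|L IH].
  rewrite /couple_inv_upto /bw_inv_upto /level_half_upto /bcouples_upto /blacks_upto /=.
  by rewrite !big_cons !big_nil; case: (col 1).
have balance := couples_upto_balance L.
rewrite couple_inv_uptoS bw_inv_uptoS level_half_uptoS bcouples_uptoS wcouples_uptoS.
rewrite (blacks_uptoS L.+1).
set cb := bcouples_upto L.+1 in IH balance *; set cw := wcouples_upto L.+1 in IH balance *.
set nb := blacks_upto L.+1 in IH balance *.
have -> : L.+2 + (cb + (col L.+1 && col L.+2)) = (L.+1 + cb + (col L.+1 && col L.+2)).+1.
  by rewrite addnA.
have -> : (nb + col L.+2).+1 = nb.+1 + col L.+2 by rewrite addSn.
rewrite binS bin1 !bin2_add_bool.
by move: IH balance; case: (col 1); case: (col L.+1); case: (col L.+2) => /=; lia.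
Qed.
End Prefix.

Section Colouring.
Variables (n : nat) (col : nat -> bool).
Hypothesis n_gt0 : 0 < n.

Local Notation N := (nodes n).
Local Notation Bc := (black_couples n col).
Local Notation Wc := (white_couples n col).

Lemma nodes_rcons : N = rcons (iota 1 (2 * n).-1) (2 * n).
Proof.
have two_n_gt0 : 0 < 2 * n by rewrite muln_gt0.
by rewrite /nodes -{1}(prednK two_n_gt0) iota_rcons add1n prednK.
Qed.

Lemma couples_rcons : couples n col =
  [seq m <- iota 1 (2 * n).-1 | col m == col m.+1] ++
  (if col (2 * n) == col 1 then [:: 2 * n] else [::]).
Proof.
rewrite /couples nodes_rcons -cats1 filter_cat /= /is_couple /nsucc eqxx; congr (_ ++ _).
apply: eq_in_filter => m; rewrite mem_iota => m_lt.
by have /negbTE -> : m != 2 * n by lia.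
Qed.

Lemma black_couples_rcons : Bc =
  [seq m <- iota 1 (2 * n).-1 | col m && col m.+1] ++
  (if col (2 * n) && col 1 then [:: 2 * n] else [::]).
Proof.
rewrite /black_couples couples_rcons filter_cat -filter_predI; congr (_ ++ _).
  by apply: eq_filter => m /=; case: (col m); case: (col m.+1).
by case c2n: (col (2 * n)); case: (col 1) => //=; rewrite c2n.
Qed.

Lemma white_couples_rcons : Wc =
  [seq m <- iota 1 (2 * n).-1 | ~~ col m && ~~ col m.+1] ++
  (if ~~ col (2 * n) && ~~ col 1 then [:: 2 * n] else [::]).
Proof.
rewrite /white_couples couples_rcons filter_cat -filter_predI; congr (_ ++ _).
  by apply: eq_filter => m /=; case: (col m); case: (col m.+1).
by case c2n: (col (2 * n)); case: (col 1) => //=; rewrite c2n.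
Qed.

Lemma size_black_couples : size Bc = bcouples_upto col (2 * n) + (col (2 * n) && col 1).
Proof. by rewrite black_couples_rcons size_cat size_filter; case: (_ && _). Qed.

Lemma size_white_couples :
  size Wc = wcouples_upto col (2 * n) + (~~ col (2 * n) && ~~ col 1).
Proof. by rewrite white_couples_rcons size_cat size_filter; case: (_ && _). Qed.

Lemma white_couples_below s : 0 < s <= 2 * n ->
  \sum_(u <- Wc) (u < s) = wcouples_upto col s.
Proof.
move=> s_node; rewrite sum_nat_of_bool white_couples_rcons count_cat.
have -> : count (fun u => u < s)
    (if ~~ col (2 * n) && ~~ col 1 then [:: 2 * n] else [::]) = 0.
  by case: (_ && _) => //=; rewrite ltnNge (proj2 (andP s_node)).
rewrite addn0 count_filter (eq_count (a2 := fun u => (~~ col u && ~~ col u.+1) && (u < s))).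
  by rewrite count_iota_lt ?subn1 //; lia.
by move=> u /=; rewrite andbC.
Qed.

Lemma couple_inversions : \sum_(s <- Bc) \sum_(u <- Wc) (u < s) =
  couple_inv_upto col (2 * n) + (col (2 * n) && col 1) * wcouples_upto col (2 * n).
Proof.
rewrite black_couples_rcons big_cat big_filter big_mkcond /=; congr (_ + _).
  apply: eq_big_seq => s; rewrite mem_iota => s_lt.
  by rewrite white_couples_below; [case: (col s && col s.+1); rewrite ?mul1n | lia].
by case: (_ && _); rewrite ?big_seq1 ?big_nil ?white_couples_below //; lia.
Qed.

Lemma bw_inversions :
  \sum_(w <- whites n col) \sum_(y <- blacks n col) (y < w) = bw_inv_upto col (2 * n).
Proof.
rewrite big_filter big_mkcond; apply: eq_big_seq => w; rewrite mem_iota => w_node.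
rewrite sum_nat_of_bool count_filter (eq_count (a2 := fun y => col y && (y < w))).
  by rewrite count_iota_lt ?subn1; [case: (col w); rewrite ?mul1n | lia].
by move=> y /=; rewrite andbC.
Qed.

Lemma sum_level_half : \sum_(x <- N) (level n col x)./2 = level_half_upto col (2 * n).
Proof.
have same_split r : count (fun m => col m == col m.+1) r =
    count (fun m => col m && col m.+1) r + count (fun m => ~~ col m && ~~ col m.+1) r.
  by elim: r => //= m r ->; case: (col m); case: (col m.+1) => /=; lia.
apply: eq_big_seq => x; rewrite mem_iota => x_node; rewrite /level /same_below.
rewrite (eq_count (a2 := fun m => (col m == col m.+1) && (m < x))) => [|m]; last first.
  by rewrite andbC.
by rewrite count_iota_lt ?subn1 ?same_split ?addnA //; lia.
Qed.

Hypothesis balanced : count col N = n.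

Lemma couples_balance :
  bcouples_upto col (2 * n) + col 1 + col (2 * n) = wcouples_upto col (2 * n) + 1.
Proof.
have := couples_upto_balance col (2 * n).-1; rewrite prednK ?muln_gt0 //.
by rewrite /blacks_upto -/(nodes n) balanced; lia.
Qed.

Lemma colouring_parity :
  \sum_(s <- Bc) \sum_(u <- Wc) (u < s) + ('C(size Bc, 2) + size Bc * col 1)
  + \sum_(x <- N) (level n col x)./2 + n * col 1
  + \sum_(w <- whites n col) \sum_(y <- blacks n col) (y < w) + 'C(n, 2) = 0 %[mod 2].
Proof.
have two_n_gt0 : 0 < 2 * n by rewrite muln_gt0.
have := prefix_parity col (2 * n).-1; rewrite prednK // /blacks_upto -/N balanced.
rewrite couple_inversions bw_inversions sum_level_half size_black_couples bin2_add_bool.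
have bin2_2n : 'C(2 * n, 2) = n %[mod 2].
  have nn : n * n = n %[mod 2] by rewrite !modn2 oddM andbb.
  by rewrite mul2n -addnn bin2D; lia.
rewrite (bin2D (2 * n)) binS bin1; move: bin2_2n couples_balance.
by case: (col 1); case: (col (2 * n)) => /=; lia.
Qed.

Lemma size_couples_balanced : size Bc = size Wc.
Proof.
rewrite size_black_couples size_white_couples; move: couples_balance.
by case: (col 1); case: (col (2 * n)) => /=; lia.
Qed.
End Colouring.

(** * The couples *)

Lemma sum_slots_ltn k (c : bool) :
  \sum_(0 <= i < k) \sum_(0 <= j < k) (j * 2 + ~~ c < i * 2 + c) = 'C(k, 2) + k * c.
Proof.
have -> : k * c = \sum_(0 <= i < k) c by rewrite sum_nat_const_nat subn0.
rewrite -bin2_sum -big_split /=; apply: eq_big_nat => i /andP[_ i_lt].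
rewrite sum_nat_of_bool (eq_count (a2 := fun j => predT j && (j < i + c))).
  by rewrite count_iota_lt ?count_predT ?size_iota ?subn0 //; case: c => /=; lia.
by move=> j /=; case: c => /=; lia.
Qed.

Section SignCouples.
Variables (n : nat) (col : nat -> bool).
Hypotheses (n_gt0 : 0 < n) (balanced : count col (nodes n) = n).

Local Notation Bc := (black_couples n col).
Local Notation Wc := (white_couples n col).

Lemma sorted_couples : sorted ltn (couples n col).
Proof. by apply: sorted_filter; [exact: ltn_trans | exact: sorted_nodes]. Qed.

Lemma sorted_black_couples : sorted ltn Bc.
Proof. by apply: sorted_filter; [exact: ltn_trans | exact: sorted_couples]. Qed.

Lemma sorted_white_couples : sorted ltn Wc.
Proof. by apply: sorted_filter; [exact: ltn_trans | exact: sorted_couples]. Qed.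

Lemma phi0_black m : m \in Bc -> phi0 n col m = index m Bc * 2 + col 1.
Proof. by rewrite mem_filter /phi0 => /andP[->]. Qed.

Lemma phi0_white m : m \in Wc -> phi0 n col m = index m Wc * 2 + ~~ col 1.
Proof. by rewrite mem_filter /phi0 => /andP[/negbTE ->]. Qed.

Lemma couple_slot_inversions :
  \sum_(s <- Bc) \sum_(u <- Wc) (phi0 n col u < phi0 n col s)
  = 'C(size Bc, 2) + size Bc * col 1.
Proof.
have Bc_uniq : uniq Bc := sorted_uniq ltn_trans ltnn sorted_black_couples.
have Wc_uniq : uniq Wc := sorted_uniq ltn_trans ltnn sorted_white_couples.
pose slot_lt j i := j * 2 + ~~ col 1 < i * 2 + col 1.
rewrite (eq_big_seq (fun s => \sum_(u <- Wc) slot_lt (index u Wc) (index s Bc))).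
  rewrite (sum_index_uniq (fun i => \sum_(u <- Wc) slot_lt (index u Wc) i)) //.
  under eq_big_nat => i _ do
    rewrite (sum_index_uniq (slot_lt^~ i)) //.
  by rewrite -(size_couples_balanced n_gt0 balanced) sum_slots_ltn.
by move=> s sB; apply: eq_big_seq => u uW; rewrite (phi0_black sB) (phi0_white uW).
Qed.

Lemma size_couples : size (couples n col) = size Bc + size Wc.
Proof.
rewrite [size Bc]size_filter [size Wc]size_filter -(count_predC col).
by congr (_ + _); apply: eq_count.
Qed.

Lemma phi0_inj : {in couples n col &, injective (phi0 n col)}.
Proof.
move=> x y xc yc; case cx: (col x); case cy: (col y).
- have [xB yB] : x \in Bc /\ y \in Bc by split; rewrite mem_filter ?cx ?cy ?xc ?yc.
  by rewrite (phi0_black xB) (phi0_black yB) => eq_phi; apply: (index_inj 0 xB yB); lia.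
- by rewrite /phi0 cx cy; case: (col 1) => /= eq_phi; exfalso; lia.
- by rewrite /phi0 cx cy; case: (col 1) => /= eq_phi; exfalso; lia.
- have [xW yW] : x \in Wc /\ y \in Wc by split; rewrite mem_filter ?cx ?cy ?xc ?yc.
  by rewrite (phi0_white xW) (phi0_white yW) => eq_phi; apply: (index_inj 0 xW yW); lia.
Qed.

Lemma phi0_lt m : m \in couples n col -> phi0 n col m < size (couples n col).
Proof.
move=> mc; rewrite size_couples -(size_couples_balanced n_gt0 balanced).
case cm: (col m).
- have mB : m \in Bc by rewrite mem_filter cm.
  by have := index_mem m Bc; rewrite mB phi0_black //; case: (col 1) => /=; lia.
- have mW : m \in Wc by rewrite mem_filter cm.
  have := index_mem m Wc; rewrite mW phi0_white // (size_couples_balanced n_gt0 balanced).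
  by case: (col 1) => /=; lia.
Qed.

Lemma sign_c_couples : sign_c n col =
  ((-1) ^+ (\sum_(s <- Bc) \sum_(u <- Wc) (u < s) + ('C(size Bc, 2) + size Bc * col 1)))%R.
Proof.
rewrite /sign_c seq_sign_map_sorted ?sorted_couples //; last first.
- exact: phi0_lt.
- exact: phi0_inj.
apply: sign_mod2; rewrite (@inversions_two_classes _ col).
- rewrite -couple_slot_inversions -big_split /=.
  by congr (_ %% 2); apply: eq_bigr => s _; rewrite big_split.
- move=> x y xB yB xy; rewrite (phi0_black xB) (phi0_black yB) ltn_add2r ltn_mul2r /=.
  by rewrite (sorted_index_ltn sorted_black_couples).
- move=> x y xW yW xy; rewrite (phi0_white xW) (phi0_white yW) ltn_add2r ltn_mul2r /=.
  by rewrite (sorted_index_ltn sorted_white_couples).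
- move=> x y xB yW; rewrite (phi0_black xB) (phi0_white yW).
  by apply/eqP; case: (col 1) => /=; lia.
Qed.
End SignCouples.

Local Open Scope ring_scope.

Theorem mainTheorem5 (n : nat) (col : nat -> bool) (rho : nat -> nat) :
  count col (nodes n) = n ->
  is_bw_pairing n col rho ->
  sign_c n col * sign_BW n col rho *
    (\prod_(b <- blacks n col) sign_bw n col b (rho b))
  = (-1) ^+ crossings n rho.
Proof.
case: n => [|n] balanced rho_pairing.
  rewrite /sign_c /sign_BW /bw_theta /crossings /couples /blacks /nodes /=.
  by rewrite !big_nil seq_sign_nil !mulr1.
rewrite sign_c_couples // (sign_BW_inversions balanced rho_pairing) prod_sign_bw.
rewrite -!exprD; apply: sign_mod2.
have := sum_sign_bw_exponents_mod2 balanced rho_pairing.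
have := crossings_mod2 balanced rho_pairing.
have := colouring_parity (ltn0Sn n) balanced.
lia.
Qed.
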